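(* (1) For integers $n\ge0$, $0\le l<q^n$ and arbitrary $k\ge0$, $$\sum_{m\in\mathbf{F}_q[T],\ \deg m<n}D_k(m)D'_l(m)=\begin{cases}0&\text{if }k+l\neq q^n-1,\\(-1)^n&\text{if }k+l=q^n-1,\end{cases}$$ the sum running over all polynomials of degree $<n$ (including $0$). (2) For $0\le l<q^n$ and $0\le k<q^n$, $$\sum_{m\ \text{monic},\ \deg m=n}D_k(m)D'_l(m)=\begin{cases}0&\text{if }k+l\neq q^n-1,\\(-1)^n&\text{if }k+l=q^n-1.\end{cases}$$
   Context: Let $q$ be a prime power and $\mathbf{F}_q[T]\subset O=\mathbf{F}_q[[T]]$. Hasse derivatives: $\mathcal{D}_n(\sum_ia_iT^i)=\sum_i\binom{i}{n}a_iT^{i-n}$ (binomial coefficients read in $\mathbf{F}_q$). For $j\ge0$ with base-$q$ expansion $j=\alpha_0+\alpha_1q+\cdots+\alpha_sq^s$ ($0\le\alpha_i<q$): $D_j(x)=\prod_{n=0}^s\mathcal{D}_n(x)^{\alpha_n}$ ($D_0=1$), and $D'_j(x)=\prod_{n=0}^sD'_{\alpha_nq^n}(x)$ where $D'_{\alpha q^n}(x)=\mathcal{D}_n(x)^\alpha$ if $0\le\alpha<q-1$ and $D'_{(q-1)q^n}(x)=\mathcal{D}_n(x)^{q-1}-1$. *)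

From HB Require Import structures.
From mathcomp Require Import all_boot all_order all_algebra.
Set Implicit Arguments. Unset Strict Implicit. Unset Printing Implicit Defensive.
Import GRing.Theory.
Local Open Scope ring_scope.

Section HasseDigits.
Variable F : finFieldType.

(* Hasse derivative calD_n: sum_i binom(i,n) a_i T^(i-n), binomials read in F.
   This is exactly mathcomp's nderivn (p^`N(n)). *)
Definition hasse (n : nat) (p : {poly F}) : {poly F} := nderivn n p.

Definition qdigit (j i : nat) : nat := ((j %/ (#|F| ^ i)) %% #|F|)%N.

(* D_j(x) = prod_i calD_i(x)^(alpha_i); digits beyond index j are 0 since q >= 2. *)
Definition Dj (j : nat) (x : {poly F}) : {poly F} :=
  \prod_(i < j.+1) (hasse i x) ^+ (qdigit j i).

(* D'_j(x) = prod_i D'_{alpha_i q^i}(x). *)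
Definition D'j (j : nat) (x : {poly F}) : {poly F} :=
  \prod_(i < j.+1)
    (if qdigit j i == (#|F|.-1)%N then (hasse i x) ^+ (#|F|.-1) - 1
     else (hasse i x) ^+ (qdigit j i)).

(* The polynomial sum_{i<n} c_i T^i (enumerates polynomials of degree < n). *)
Definition polyOf (n : nat) (c : {ffun 'I_n -> F}) : {poly F} := \sum_(i < n) c i *: 'X^i.
End HasseDigits.

From mathcomp Require Import all_boot all_algebra finfield zify ring.
Set Implicit Arguments. Unset Strict Implicit. Unset Printing Implicit Defensive.
Import GRing.Theory.

(* Write m = p0 + sum_(i < n) c_i T^i.  Since D_j(T^i) = binom(i, j) T^(i-j) vanishes for
   i < j and is 1 for i = j, the j-th Hasse derivative of m is c_j plus a polynomial that
   depends only on p0 and on the c_i with i > j.  Both D_k(m) and D'_l(m) factor over the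
   base-q digits of k and l into powers of the D_j(m), so summing over c_0, then c_1, and so
   on, splits the sum into a product over j of sums sum_(x in F_q) (x + r)^(k_j) D'(x + r)
   with r a polynomial.  Power sums over F_q and the Frobenius (x + r)^q = x + r^q make each
   of these -1 when k_j + l_j = q - 1 and 0 otherwise, and k + l = q^n - 1 exactly when this
   holds for every digit.  In part (1) with k >= q^n, k has a nonzero digit at some j >= n,
   where D_j(m) = 0 because deg m < n. *)

Lemma eqn_add_digits_pred q Q k0 k1 l0 l1 :
    k0 < q -> l0 < q -> k1 < Q -> l1 < Q ->
  (k1 * q + k0 + (l1 * q + l0) == q * Q - 1) =
  (k0 + l0 == q.-1) && (k1 + l1 == Q - 1).
Proof.
move=> k0q l0q k1Q l1Q; apply/eqP/andP => [E|[/eqP e0 /eqP e1]]; last by nia.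
by case: (ltngtP (k1 + l1).+1 Q); nia.
Qed.

Local Open Scope ring_scope.

Lemma prodr_if_forall (R : comPzSemiRingType) n (P : pred 'I_n) (a : R) :
  \prod_(i < n) (if P i then a else 0) = if [forall i, P i] then a ^+ n else 0.
Proof.
case: (boolP [forall i, P i]) => [/forallP allP | /forallPn[i /negPf Pi]].
  by rewrite (eq_bigr (fun=> a)) ?prodr_const ?card_ord // => i _; rewrite allP.
by rewrite (bigD1 i) //= Pi mul0r.
Qed.

Section TriangularSums.
Variable T : finType.

Definition ffun_cons n (x : T) (c : {ffun 'I_n -> T}) : {ffun 'I_n.+1 -> T} :=
  [ffun i => if unlift ord0 i is Some j then c j else x].

Lemma ffun_cons0 n x (c : {ffun 'I_n -> T}) : ffun_cons x c ord0 = x.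
Proof. by rewrite ffunE unlift_none. Qed.

Lemma ffun_consS n x (c : {ffun 'I_n -> T}) j : ffun_cons x c (lift ord0 j) = c j.
Proof. by rewrite ffunE liftK. Qed.

Lemma sum_ffun_cons (M : nmodType) n (f : {ffun 'I_n.+1 -> T} -> M) :
  \sum_c f c = \sum_(x : T) \sum_(c : {ffun 'I_n -> T}) f (ffun_cons x c).
Proof.
pose uncons (c : {ffun 'I_n.+1 -> T}) := (c ord0, [ffun j => c (lift ord0 j)]).
have consK : cancel (fun p => ffun_cons p.1 p.2) uncons.
  move=> [x c]; rewrite /uncons ffun_cons0; congr pair.
  by apply/ffunP => j; rewrite !ffunE liftK.
have unconsK : cancel uncons (fun p => ffun_cons p.1 p.2).
  by move=> c; apply/ffunP => i; rewrite ffunE; case: unliftP => [j|] ->; rewrite ?ffunE.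
by rewrite (reindex _ (onW_bij _ (Bijective consK unconsK))) pair_bigA.
Qed.

Variables (V : zmodType) (R : comPzSemiRingType) (e : T -> V).

(* The sum over c_0 is done first: only G c ord0 depends on c_0, and only through e c_0. *)
Lemma sum_prod_triangular n (h : nat -> V -> R) (s : nat -> R)
    (G : {ffun 'I_n -> T} -> 'I_n -> V) :
  (forall j r, \sum_(x : T) h j (e x + r) = s j) ->
  (forall (c c' : {ffun 'I_n -> T}) (j : 'I_n),
     (forall i : 'I_n, (j < i)%N -> c i = c' i) -> G c j - e (c j) = G c' j - e (c' j)) ->
  \sum_c \prod_(j < n) h j (G c j) = \prod_(j < n) s j.
Proof.
elim: n h s G => [|n IHn] h s G sum_h G_triang.
  rewrite big_ord0 (eq_bigr (fun=> 1)) => [|c _]; last by rewrite big_ord0.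
  by rewrite sumr_const card_ffun card_ord.
have [x0 _ | T0] := pickP (@predT T); last first.
  by rewrite sum_ffun_cons big_ord_recl -(sum_h 0%N 0) !(big_pred0 _ _ _ _ T0) mul0r.
pose G' (c : {ffun 'I_n -> T}) (j : 'I_n) := G (ffun_cons x0 c) (lift ord0 j).
have cons_agree x y c (j i : 'I_n.+1) : (j < i)%N -> ffun_cons x c i = ffun_cons y c i.
  by case: (unliftP ord0 i) => [i' ->|->]; rewrite ?ffun_consS.
have G_lift x c (j : 'I_n) : G (ffun_cons x c) (lift ord0 j) = G' c j.
  have := G_triang _ (ffun_cons x0 c) (lift ord0 j) (cons_agree x x0 c _).
  by rewrite !ffun_consS => /addIr.
have G_ord0 x c : G (ffun_cons x c) ord0 = e x + (G (ffun_cons x0 c) ord0 - e x0).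
  have := G_triang _ _ ord0 (cons_agree x x0 c ord0).
  by rewrite !ffun_cons0 => <-; rewrite addrC subrK.
rewrite sum_ffun_cons exchange_big /= [RHS]big_ord_recl.
rewrite -(IHn (fun j => h j.+1) (fun j => s j.+1) G'); last 2 first.
- by move=> j r; apply: sum_h.
- move=> c c' j agree; have := G_triang (ffun_cons x0 c) (ffun_cons x0 c') (lift ord0 j).
  rewrite !ffun_consS; apply => i; case: (unliftP ord0 i) => [i' ->|->] //.
  by rewrite !ffun_consS lift0 ltnS => /agree.
rewrite mulr_sumr; apply: eq_bigr => c _.
have tail x : \prod_(j < n) h (lift ord0 j) (G (ffun_cons x c) (lift ord0 j)) =
              \prod_(j < n) h j.+1 (G' c j).
  by apply: eq_bigr => j _; rewrite G_lift lift0.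
under eq_bigr => x _ do rewrite big_ord_recl G_ord0 tail.
by rewrite -mulr_suml sum_h.
Qed.

End TriangularSums.

Section FiniteField.
Variable F : finFieldType.
Local Notation q := #|F|.
Let q_gt1 : (1 < q)%N := finNzRing_gt1 F.
Let q_gt0 : (0 < q)%N := ltnW q_gt1.
Let q1_gt0 : (0 < q.-1)%N. Proof. by rewrite ltn_predRL. Qed.

Lemma qdigit_lt j i : (qdigit F j i < q)%N.
Proof. exact: ltn_pmod. Qed.

Lemma qdigit_small j i : (j < q ^ i)%N -> qdigit F j i = 0%N.
Proof. by move=> lt_j; rewrite /qdigit divn_small ?mod0n. Qed.

Lemma qdigit0 j : qdigit F j 0 = (j %% q)%N.
Proof. by rewrite /qdigit divn1. Qed.

Lemma qdigitS j i : qdigit F j i.+1 = qdigit F (j %/ q) i.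
Proof. by rewrite /qdigit expnS divnMA. Qed.

Lemma qdigit_trunc_log j : (0 < j)%N -> qdigit F j (trunc_log q j) != 0%N.
Proof.
move=> j_gt0; rewrite /qdigit modn_small -?lt0n.
  by rewrite divn_gt0 ?expn_gt0 ?q_gt0 // trunc_logP.
by rewrite ltn_divLR ?expn_gt0 ?q_gt0 // -expnS trunc_log_ltn.
Qed.

Lemma eqn_add_pred_qdigits n k l : (k < q ^ n)%N -> (l < q ^ n)%N ->
  (k + l == q ^ n - 1)%N = [forall i : 'I_n, qdigit F k i + qdigit F l i == q.-1]%N.
Proof.
elim: n k l => [|n IHn] k l.
  by rewrite expn0 !ltnS !leqn0 => /eqP-> /eqP->; apply/esym/forallP => -[].
move=> lt_k lt_l; have lt_div m : (m < q ^ n.+1 -> m %/ q < q ^ n)%N.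
  by rewrite ltn_divLR // -expnSr.
rewrite -(big_andE xpredT) big_ord_recl.
under eq_bigr => i do rewrite lift0 !qdigitS.
rewrite (big_andE xpredT) -IHn ?lt_div // !qdigit0.
by rewrite {1}(divn_eq k q) {1}(divn_eq l q) expnS eqn_add_digits_pred ?ltn_pmod ?lt_div.
Qed.

Lemma pnat_card_pchar_poly : [pchar {poly F}].-nat q.
Proof.
have [p p_pr pcharFp] := finPcharP F.
have pcharPp : p \in [pchar {poly F}] by rewrite pchar_poly.
by rewrite (card_pprimeChar pcharFp) (eq_pnat _ (pcharf_eq pcharPp)) pnatX pnat_id.
Qed.

Lemma exprD_card_poly (a b : {poly F}) : (a + b) ^+ q = a ^+ q + b ^+ q.
Proof. exact: exprDn_pchar pnat_card_pchar_poly. Qed.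

Lemma polyC_expr_card (x : F) : x%:P ^+ q = x%:P.
Proof. by rewrite -rmorphXn /= expf_card. Qed.

Lemma natr_card : q%:R = 0 :> F.
Proof.
have [p _ pcharFp] := finPcharP F; have := q_gt1.
by rewrite (card_pprimeChar pcharFp) natrX (pcharf0 pcharFp) expr0n; case: logn.
Qed.

Lemma expf_card_pred (x : F) : x != 0 -> x ^+ q.-1 = 1.
Proof.
move=> x_neq0; apply: (mulIf x_neq0).
by rewrite mul1r -exprSr prednK ?expf_card.
Qed.

Lemma exists_expf_neq1 j : (0 < j < q.-1)%N -> exists2 a : F, a != 0 & a ^+ j != 1.
Proof.
case/andP => j_gt0 lt_j.
suff /existsP[a /andP[]] : [exists a : F, (a != 0) && (a ^+ j != 1)] by exists a.
apply/contraT; rewrite negb_exists => /forallP all_roots.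
pose p : {poly F} := 'X^j - 1.
have size_p : size p = j.+1 by rewrite size_polyDl ?size_polyXn ?size_polyN ?size_poly1.
have roots_p : all (root p) (enum (predC1 0)).
  apply/allP => x; rewrite mem_enum => x_neq0.
  by have := all_roots x; rewrite (x_neq0 : x != 0) negbK rootE !hornerE subr_eq0.
have p_neq0 : p != 0 by rewrite -size_poly_eq0 size_p.
have := max_poly_roots p_neq0 roots_p (enum_uniq _).
by rewrite -cardE cardC1 size_p ltnS leqNgt lt_j.
Qed.

(* The sum is invariant under x |-> a x, which multiplies it by a^j <> 1. *)
Lemma sum_expr_lt_card_pred j : (j < q.-1)%N -> \sum_(x : F) x ^+ j = 0.
Proof.
case: (posnP j) => [-> _ | j_gt0 lt_j].
  by rewrite (eq_bigr (fun=> 1)) ?sumr_const ?card_ord ?natr_card.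
have [a a_neq0 aj_neq1] := exists_expf_neq1 (introT andP (conj j_gt0 lt_j)).
have /eqP : \sum_(x : F) x ^+ j = a ^+ j * \sum_(x : F) x ^+ j.
  rewrite mulr_sumr (reindex_inj (mulfI a_neq0)).
  by apply: eq_bigr => x _; rewrite exprMn.
rewrite -subr_eq0 -[X in X - _]mul1r -mulrBl mulf_eq0 subr_eq0 eq_sym.
by rewrite (negPf aj_neq1) => /eqP.
Qed.

Lemma sum_expr_card_pred : \sum_(x : F) x ^+ q.-1 = -1.
Proof.
rewrite (bigD1 0) //= expr0n eqn0Ngt q1_gt0 add0r.
rewrite (eq_bigr (fun=> 1)) => [|x x_neq0]; last exact: expf_card_pred.
rewrite sumr_const cardC1 -[RHS]add0r -natr_card -{2}(ltn_predK q_gt1).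
by rewrite mulrSr addrK.
Qed.

Lemma sum_expr_le_card_pred j : (j <= q.-1)%N ->
  \sum_(x : F) x ^+ j = if j == q.-1 then -1 else 0.
Proof.
rewrite leq_eqVlt => /orP[/eqP-> | lt_j]; first by rewrite eqxx sum_expr_card_pred.
by rewrite sum_expr_lt_card_pred // ltn_eqF.
Qed.

Lemma sum_translate_expr_le e (r : {poly F}) : (e <= q.-1)%N ->
  \sum_(x : F) (x%:P + r) ^+ e = (\sum_(x : F) x ^+ e)%:P.
Proof.
move=> le_e; under eq_bigr => x _ do rewrite exprDn.
rewrite exchange_big big_ord_recl /= [X in _ + X]big1 ?addr0 => [|i _].
  rewrite rmorph_sum; apply: eq_bigr => x _.
  by rewrite subn0 bin0 expr0 mulr1 mulr1n rmorphXn.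
under eq_bigr => x _ do rewrite -rmorphXn.
rewrite sumrMnl -mulr_suml -rmorph_sum sum_expr_lt_card_pred ?mul0r ?mul0rn //.
by have := ltn_ord i; rewrite /bump leq0n add1n; lia.
Qed.

Lemma sum_translate_expr_card f (r : {poly F}) : (f < q.-1)%N ->
  \sum_(x : F) (x%:P + r) ^+ (q + f) = (\sum_(x : F) x ^+ f.+1)%:P.
Proof.
move=> lt_f.
have frobenius x :
    (x%:P + r) ^+ (q + f) = (x%:P + r) ^+ f.+1 + (r ^+ q - r) * (x%:P + r) ^+ f.
  by rewrite exprD exprD_card_poly polyC_expr_card exprS; ring.
rewrite (eq_bigr _ (fun x _ => frobenius x)) big_split /= -mulr_sumr.
rewrite !sum_translate_expr_le ?(sum_expr_lt_card_pred lt_f) ?(ltnW lt_f) //.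
by rewrite rmorph0 mulr0 addr0.
Qed.

Lemma sum_translate_expr e (r : {poly F}) : (e <= (q.-1).*2)%N ->
  \sum_(x : F) (x%:P + r) ^+ e = if (e == q.-1) || (e == (q.-1).*2) then -1 else 0.
Proof.
rewrite -addnn => le_e; have [le_eq1 | lt_q1e] := leqP e q.-1.
  have -> : (e == q.-1 + q.-1)%N = false by apply/eqP; lia.
  rewrite sum_translate_expr_le // sum_expr_le_card_pred // orbF.
  by case: eqP; rewrite ?rmorphN1 ?rmorph0.
have [f -> lt_f] : exists2 f, e = (q + f)%N & (f < q.-1)%N by exists (e - q)%N; lia.
have -> : (q + f == q.-1)%N = false by apply/eqP; lia.
have -> : (q + f == q.-1 + q.-1)%N = (f.+1 == q.-1) by apply/eqP/eqP; lia.
rewrite sum_translate_expr_card // sum_expr_le_card_pred //.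
by case: eqP; rewrite ?rmorphN1 ?rmorph0.
Qed.

Definition dual_expr (y : {poly F}) (b : nat) : {poly F} :=
  if b == q.-1 then y ^+ q.-1 - 1 else y ^+ b.

Lemma dual_expr0 (y : {poly F}) : dual_expr y 0 = 1.
Proof. by rewrite /dual_expr eq_sym eqn0Ngt q1_gt0. Qed.

Lemma sum_translate_digit_term a b (r : {poly F}) : (a < q)%N -> (b < q)%N ->
  \sum_(x : F) (x%:P + r) ^+ a * dual_expr (x%:P + r) b =
  if (a + b == q.-1)%N then -1 else 0.
Proof.
move=> lt_a lt_b; rewrite /dual_expr; have [->|b_neq] := eqVneq b q.-1.
  under eq_bigr => x _ do rewrite mulrBr mulr1 -exprD.
  rewrite sumrB !sum_translate_expr -?addnn; try lia.
  have -> : (a + q.-1 == q.-1)%N = (a == 0)%N by apply/eqP/eqP; lia.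
  have -> : (a + q.-1 == q.-1 + q.-1)%N = (a == q.-1) by apply/eqP/eqP; lia.
  have -> : (a == q.-1 + q.-1)%N = false by apply/eqP; lia.
  have [->|a_neq] := eqVneq a q.-1; last by rewrite !orbF subr0.
  by rewrite /= eqn0Ngt q1_gt0 subrr.
under eq_bigr => x _ do rewrite -exprD.
rewrite sum_translate_expr -?addnn; last by lia.
have -> : (a + b == q.-1 + q.-1)%N = false by apply/eqP; lia.
by rewrite orbF.
Qed.

Lemma hasse_polyOf_sub n (c : {ffun 'I_n -> F}) (j : 'I_n) :
  hasse j (polyOf c) - (c j)%:P =
  \sum_(i < n | (j < i)%N) c i *: ('X^(i - j) *+ 'C(i, j)).
Proof.
rewrite /hasse /polyOf raddf_sum (bigD1 j) //= nderivnZ nderivnXn subnn binn expr0.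
rewrite alg_polyC addrC addrK big_mkcond [RHS]big_mkcond; apply: eq_bigr => i _.
rewrite nderivnZ nderivnXn; case: ltngtP => [lt_ji|lt_ij|/val_inj->]; last by rewrite eqxx.
  by rewrite ifT // neq_ltn lt_ji orbT.
by rewrite bin_small ?mulr0n ?scaler0 ?if_same.
Qed.

Lemma hasse_polyOf_ge n (c : {ffun 'I_n -> F}) i : (n <= i)%N -> hasse i (polyOf c) = 0.
Proof.
move=> le_ni; rewrite /hasse /polyOf raddf_sum big1 // => j _ /=.
by rewrite nderivnZ nderivnXn bin_small ?mulr0n ?scaler0 // (leq_trans (ltn_ord j)).
Qed.

Lemma hasse_add_polyOf_triangular (p0 : {poly F}) n (c c' : {ffun 'I_n -> F}) (j : 'I_n) :
    (forall i : 'I_n, (j < i)%N -> c i = c' i) ->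
  hasse j (p0 + polyOf c) - (c j)%:P = hasse j (p0 + polyOf c') - (c' j)%:P.
Proof.
move=> agree; rewrite /hasse !nderivnD -!addrA -!/(hasse _ _) !hasse_polyOf_sub.
by congr (_ + _); apply: eq_bigr => i /agree->.
Qed.

Lemma prod_qdigits_widen (R : comPzSemiRingType) (f : nat -> nat -> R) j n m :
    (forall i, f i 0%N = 1) -> (j < q ^ n)%N -> (j < q ^ m)%N ->
  \prod_(i < n) f i (qdigit F j i) = \prod_(i < m) f i (qdigit F j i).
Proof.
wlog le_nm : n m / (n <= m)%N => [wlog_nm f0 lt_jn lt_jm|f0 lt_jn _].
  by case: (leqP n m) => [|/ltnW] le; [|symmetry]; apply: wlog_nm.
rewrite -(subnKC le_nm) big_split_ord /= [X in _ * X]big1 ?mulr1 // => i _.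
by rewrite qdigit_small ?f0 // (leq_trans lt_jn) // leq_pexp2l ?leq_addr.
Qed.

Lemma Dj_D'j_prod n k l (x : {poly F}) : (k < q ^ n)%N -> (l < q ^ n)%N ->
  Dj k x * D'j l x =
  \prod_(i < n) (hasse i x ^+ qdigit F k i * dual_expr (hasse i x) (qdigit F l i)).
Proof.
have lt_pow j : (j < q ^ j.+1)%N := ltnW (ltn_expl j.+1 q_gt1).
move=> lt_k lt_l; rewrite big_split /= /Dj /D'j; congr (_ * _).
  by rewrite (@prod_qdigits_widen _ (fun i d => hasse i x ^+ d) k k.+1 n
                (fun=> expr0 _) (lt_pow k) lt_k).
by rewrite (@prod_qdigits_widen _ (fun i d => dual_expr (hasse i x) d) l l.+1 n
              (fun=> dual_expr0 _) (lt_pow l) lt_l).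
Qed.

Lemma Dj_eq0 k (x : {poly F}) i : hasse i x = 0 -> qdigit F k i != 0%N -> Dj k x = 0.
Proof.
move=> hasse_x0 digit_neq0; have lt_ik : (i < k.+1)%N.
  rewrite ltnS leqNgt; apply: contra digit_neq0 => lt_ki.
  by rewrite qdigit_small // (ltn_trans lt_ki (ltn_expl _ q_gt1)).
by rewrite /Dj (bigD1 (Ordinal lt_ik)) // /= hasse_x0 expr0n (negPf digit_neq0) mul0r.
Qed.

Lemma sum_Dj_D'j_shift (p0 : {poly F}) n k l : (k < q ^ n)%N -> (l < q ^ n)%N ->
  \sum_(c : {ffun 'I_n -> F}) Dj k (p0 + polyOf c) * D'j l (p0 + polyOf c) =
  if (k + l == q ^ n - 1)%N then (-1) ^+ n else 0.
Proof.
move=> lt_k lt_l; under eq_bigr => c _ do rewrite (Dj_D'j_prod _ lt_k lt_l).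
rewrite (@sum_prod_triangular _ _ _ polyC n
  (fun i y => y ^+ qdigit F k i * dual_expr y (qdigit F l i))
  (fun i => if (qdigit F k i + qdigit F l i == q.-1)%N then -1 else 0)
  (fun c j => hasse j (p0 + polyOf c))).
- by rewrite prodr_if_forall -eqn_add_pred_qdigits.
- by move=> i r; apply: sum_translate_digit_term; apply: qdigit_lt.
- exact: hasse_add_polyOf_triangular.
Qed.

Lemma sum_Dj_D'j_large n k l : (q ^ n <= k)%N ->
  \sum_(c : {ffun 'I_n -> F}) Dj k (polyOf c) * D'j l (polyOf c) = 0.
Proof.
move=> le_k; apply: big1 => c _.
have k_gt0 : (0 < k)%N by apply: leq_trans le_k; rewrite expn_gt0 q_gt0.
rewrite (@Dj_eq0 _ _ (trunc_log q k)) ?mul0r ?qdigit_trunc_log //.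
by apply: hasse_polyOf_ge; apply: trunc_log_max.
Qed.

End FiniteField.

Theorem theorem9 (F : finFieldType) :
  (forall (n l k : nat), (l < #|F| ^ n)%N ->
     \sum_(c : {ffun 'I_n -> F}) Dj k (polyOf c) * D'j l (polyOf c)
     = (if (k + l == #|F| ^ n - 1)%N then (-1) ^+ n else 0 : {poly F}))
  /\
  (forall (n l k : nat), (l < #|F| ^ n)%N -> (k < #|F| ^ n)%N ->
     \sum_(c : {ffun 'I_n -> F}) Dj k ('X^n + polyOf c) * D'j l ('X^n + polyOf c)
     = (if (k + l == #|F| ^ n - 1)%N then (-1) ^+ n else 0 : {poly F})).
Proof.
split=> n l k lt_l; last by move=> lt_k; apply: sum_Dj_D'j_shift.
have [lt_k | le_k] := ltnP k (#|F| ^ n).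
  by rewrite -(sum_Dj_D'j_shift 0 lt_k lt_l); apply: eq_bigr => c _; rewrite add0r.
by rewrite sum_Dj_D'j_large // ifF //; apply/eqP; lia.
Qed.
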